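(* Let $\lambda_2$ be the second smallest eigenvalue of the Laplacian of $G$ and $\psi_c=8\,n\,\Delta\, s_{\max}/\lambda_2$. Suppose $m\ge 8\,\delta\, n^2\,\mathcal{S}\, s_{\max}$ for some $\delta>1$. Then every state $x$ with $\Psi_0(x)\le 4\psi_c$ is a $2/(1+\delta)$-approximate Nash equilibrium.
   Context: $G=(V,E)$ is a connected undirected graph on $n\ge2$ vertices with maximum degree $\Delta$; its Laplacian $L$ has $L_{ii}=\deg(i)$, $L_{ij}=-1$ if $\{i,j\}\in E$, $0$ otherwise. Processor $i$ has speed $s_i>0$, scaled so the smallest speed is $1$; $s_{\max}=\max_i s_i$, $\mathcal{S}=\sum_i s_i$. There are $m$ unit tasks; a state $x$ assigns each task to a processor, $w_i(x)$ is the number of tasks on $i$ and $\ell_i(x)=w_i(x)/s_i$. $\Psi_0(x)=\sum_i (w_i(x)-m s_i/\mathcal{S})^2/s_i$. A state is an $\varepsilon$-approximate Nash equilibrium if $(1-\varepsilon)\ell_i-\ell_j\le 1/s_j$ for every ordered pair $(i,j)$ of adjacent processors. *)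

From mathcomp Require Import all_boot all_order all_algebra.
From mathcomp Require Import reals.
Set Implicit Arguments. Unset Strict Implicit. Unset Printing Implicit Defensive.
Import Order.TTheory GRing.Theory Num.Theory.
Local Open Scope ring_scope.

Definition simple_graph (n : nat) (e : rel 'I_n) : Prop :=
  (forall i j, e i j = e j i) /\ (forall i, ~~ e i i).

Definition connected_graph (n : nat) (e : rel 'I_n) : Prop :=
  forall i j, connect e i j.

Definition deg (n : nat) (e : rel 'I_n) (i : 'I_n) : nat := #|[pred j | e i j]|.

Definition max_deg (n : nat) (e : rel 'I_n) : nat := \max_(i < n) deg e i.

Definition laplacian (R : ringType) (n : nat) (e : rel 'I_n) : 'M[R]_n :=
  \matrix_(i, j) (if i == j then (deg e i)%:R else if e i j then -1 else 0).

(* lam is the second smallest eigenvalue of A, eigenvalues counted with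
   multiplicity: the characteristic polynomial of A factors as
   prod (X - a) over the nondecreasingly sorted list ev, and lam = ev_2. *)
Definition second_smallest_eigenvalue (R : realType) (n : nat) (A : 'M[R]_n)
    (lam : R) : Prop :=
  exists ev : seq R,
    [/\ size ev = n, sorted <=%R ev,
        char_poly A = \prod_(a <- ev) ('X - a%:P) & lam = ev`_1].

Definition s_max (R : realType) (n : nat) (s : 'I_n -> R) : R :=
  \big[Num.max/0]_(i < n) s i.

Definition s_sum (R : realType) (n : nat) (s : 'I_n -> R) : R :=
  \sum_(i < n) s i.

(* a state assigns each of the m unit tasks to a processor *)
Definition load_w (n m : nat) (x : 'I_m -> 'I_n) (i : 'I_n) : nat :=
  #|[pred t | x t == i]|.

Definition load_l (R : realType) (n m : nat) (s : 'I_n -> R)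
    (x : 'I_m -> 'I_n) (i : 'I_n) : R :=
  (load_w x i)%:R / s i.

Definition Psi0 (R : realType) (n m : nat) (s : 'I_n -> R)
    (x : 'I_m -> 'I_n) : R :=
  \sum_(i < n) ((load_w x i)%:R - m%:R * s i / s_sum s) ^+ 2 / s i.

Definition approx_NE (R : realType) (n m : nat) (e : rel 'I_n)
    (s : 'I_n -> R) (eps : R) (x : 'I_m -> 'I_n) : Prop :=
  forall i j, e i j ->
    (1 - eps) * load_l s x i - load_l s x j <= 1 / s j.

From mathcomp Require Import all_boot all_order all_algebra.
From mathcomp Require Import reals.
From mathcomp Require Import ring lra.
Import Order.TTheory GRing.Theory Num.Theory.
Local Open Scope ring_scope.
Set Implicit Arguments. Unset Strict Implicit.

(* Every positive Laplacian eigenvalue of a connected graph is at least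
   1/(2 n^2): an eigenvector f of a nonzero eigenvalue sums to zero, so
   some difference f a - f b dominates every |f j|, while along a shortest
   path from b to a the Cauchy-Schwarz inequality bounds (f a - f b)^2 by
   n times the Dirichlet energy, which is twice the eigenvalue times the
   squared norm of f.  Hence Psi_0 <= 4 psi_c <= B^2 with B = 8 n^2 s_max,
   so every load deviates from m/S by at most B, as s_i >= 1.  Since
   m/S >= delta B, any two loads lie in [m/S - B, m/S + B] with
   m/S + B <= (1 + delta)/(delta - 1) (m/S - B), which is exactly the
   2/(1+delta)-approximate equilibrium condition (even with 0 in place of
   1/s_j). *)

Section Laplacian.
Variables (R : realFieldType) (n : nat) (e : rel 'I_n).
Hypothesis e_simple : simple_graph e.

Lemma sum_adj_deg (i : 'I_n) : \sum_j ((e i j)%:R : R) = (deg e i)%:R.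
Proof.
rewrite /deg -sum1_card natr_sum [RHS]big_mkcond /=.
by apply: eq_bigr => j _; rewrite inE; case: (e i j).
Qed.

Lemma laplacianE i j :
  laplacian R e i j = (i == j)%:R * (deg e i)%:R - (e i j)%:R.
Proof.
rewrite /laplacian mxE; case: eqP => [->|_].
  by rewrite (negbTE (e_simple.2 j)) mul1r subr0.
by rewrite mul0r sub0r; case: (e i j); rewrite ?oppr0.
Qed.

Lemma laplacian_row_sum i : \sum_j laplacian R e i j = 0.
Proof.
under eq_bigr do rewrite laplacianE.
rewrite sumrB sum_adj_deg (bigD1 i) //= eqxx mul1r big1 ?addr0 ?subrr //.
by move=> j /negbTE; rewrite eq_sym => ->; rewrite mul0r.
Qed.

Variable f : 'I_n -> R.

(* Sum over ordered pairs, so every edge is counted twice. *)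
Definition dirichlet_energy := \sum_i \sum_j (e i j)%:R * (f i - f j) ^+ 2.

Lemma laplacian_quadraticE :
  \sum_j (\sum_i f i * laplacian R e i j) * f j = dirichlet_energy / 2.
Proof.
have cross_free : \sum_j (\sum_i f i * laplacian R e i j) * f j =
    \sum_i (deg e i)%:R * f i ^+ 2 - \sum_i \sum_j (e i j)%:R * (f i * f j).
  under eq_bigr do rewrite mulr_suml.
  rewrite exchange_big /= -sumrB; apply: eq_bigr => i _.
  rewrite (bigD1 i) //= [X in _ = _ - X](bigD1 i) //= laplacianE eqxx mul1r.
  rewrite (negbTE (e_simple.2 i)) subr0 mul0r add0r.
  have -> : \sum_(j < n | j != i) (e i j)%:R * (f i * f j) =
      - \sum_(j < n | j != i) f i * laplacian R e i j * f j.
    rewrite -sumrN; apply: eq_bigr => j /negbTE ji.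
    by rewrite laplacianE eq_sym ji mul0r sub0r; ring.
  ring.
have energy_split : dirichlet_energy =
    \sum_i (deg e i)%:R * f i ^+ 2 + \sum_i (deg e i)%:R * f i ^+ 2
    - 2 * \sum_i \sum_j (e i j)%:R * (f i * f j).
  have sym : \sum_i \sum_j (e i j)%:R * f j ^+ 2 = \sum_i (deg e i)%:R * f i ^+ 2.
    rewrite exchange_big /=; apply: eq_bigr => i _.
    by rewrite -sum_adj_deg mulr_suml; apply: eq_bigr => j _; rewrite e_simple.1.
  rewrite -{2}sym /dirichlet_energy mulr_sumr -big_split -sumrB /=.
  apply: eq_bigr => i _.
  rewrite -sum_adj_deg mulr_suml mulr_sumr -big_split -sumrB /=.
  by apply: eq_bigr => j _; ring.
by rewrite cross_free energy_split; field.
Qed.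

Definition row_energy i := \sum_j (e i j)%:R * (f i - f j) ^+ 2.

Lemma row_energy_ge0 i : 0 <= row_energy i.
Proof. by apply: sumr_ge0 => j _; rewrite mulr_ge0 ?ler0n ?sqr_ge0. Qed.

Fixpoint path_energy (x : 'I_n) (p : seq 'I_n) : R :=
  if p is y :: p' then (f x - f y) ^+ 2 + path_energy y p' else 0.

Lemma path_energy_ge0 x p : 0 <= path_energy x p.
Proof. by elim: p x => [|y p IH] x //=; rewrite addr_ge0 ?sqr_ge0. Qed.

Lemma sqr_diff_last_le x p :
  (f x - f (last x p)) ^+ 2 <= (size p)%:R * path_energy x p.
Proof.
elim: p x => [|y p IH] x /=; first by rewrite subrr expr0n mul0r.
have := IH y; have := path_energy_ge0 y p.
set S := path_energy y p; set d := f x - f y; set D := f y - f (last y p).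
have -> : f x - f (last y p) = d + D by rewrite /d /D; ring.
case: (size p) => [|k] S_ge0.
  rewrite mul0r => D_le0.
  have D0 : D = 0 by apply/eqP; rewrite -sqrf_eq0 eq_le D_le0 sqr_ge0.
  by rewrite D0 addr0 mul1r lerDl.
(* (d + D)^2 <= (1 + k) d^2 + (1 + 1/k) D^2, multiplied through by k. *)
rewrite -[k.+2]addn1 natrD; set K := k.+1%:R => IHy.
have K_gt0 : 0 < K by rewrite ltr0Sn.
have := sqr_ge0 (d * K - D) => sq_ge0.
rewrite -(ler_pM2l K_gt0); nra.
Qed.

Lemma path_energy_le x p :
  path e x p -> path_energy x p <= \sum_(i <- x :: p) row_energy i.
Proof.
elim: p x => [|y p IH] x /=; first by rewrite big_cons big_nil addr0 row_energy_ge0.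
case/andP=> exy pth; rewrite big_cons; apply: lerD; last exact: IH.
rewrite /row_energy (bigD1 y) //= exy mul1r lerDl.
by apply: sumr_ge0 => j _; rewrite mulr_ge0 ?ler0n ?sqr_ge0.
Qed.

Lemma sum_uniq_row_energy_le (p : seq 'I_n) :
  uniq p -> \sum_(i <- p) row_energy i <= dirichlet_energy.
Proof.
move=> p_uniq; rewrite big_uniq // /dirichlet_energy -/row_energy big_mkcond /=.
by apply: ler_sum => i _; case: (i \in p); rewrite ?row_energy_ge0.
Qed.

Hypothesis e_connected : connected_graph e.

Lemma sqr_diff_le_energy a b : (f a - f b) ^+ 2 <= n%:R * dirichlet_energy.
Proof.
case/connectP: (e_connected a b) => p pth ->.
case: (shortenP pth) => p' pth' p'_uniq _.
have size_lt : (size p' < n)%N.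
  by have := max_card [pred x in a :: p']; rewrite card_ord (card_uniqP p'_uniq).
apply: le_trans (sqr_diff_last_le a p') _.
apply: le_trans (ler_wpM2r (path_energy_ge0 _ _) (_ : _ <= n%:R)) _.
  by rewrite ler_nat ltnW.
apply: ler_wpM2l; first exact: ler0n.
exact: le_trans (path_energy_le pth') (sum_uniq_row_energy_le p'_uniq).
Qed.

End Laplacian.

Lemma sum_sqr_le_range (R : realFieldType) (n : nat) (f : 'I_n -> R) (i0 : 'I_n) :
  \sum_j f j = 0 -> exists a b, \sum_j f j ^+ 2 <= n%:R * (f a - f b) ^+ 2.
Proof.
move=> sum0.
case: (@arg_maxP _ _ _ i0 predT f isT) => a _ max_a.
case: (@arg_minP _ _ _ i0 predT f isT) => b _ min_b.
exists a, b.
have n_gt0 : (0 : R) < n%:R by rewrite ltr0n (leq_ltn_trans _ (ltn_ord i0)).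
have const_sum (c : R) : \sum_(j < n) c = n%:R * c.
  by rewrite sumr_const card_ord mulr_natl.
have fa_ge0 : 0 <= f a.
  rewrite -(pmulr_rge0 (f a) n_gt0) -const_sum -{1}sum0.
  by apply: ler_sum => j _; exact: max_a.
have fb_le0 : f b <= 0.
  rewrite -(pmulr_rle0 (f b) n_gt0) -const_sum -{2}sum0.
  by apply: ler_sum => j _; exact: min_b.
rewrite -const_sum; apply: ler_sum => j _.
have ja : f j <= f a := max_a j isT.
have bj : f b <= f j := min_b j isT.
have : 0 <= (f a - f b - f j) * (f a - f b + f j) by apply: mulr_ge0; lra.
nra.
Qed.

Section LaplacianEigenvalues.
Variables (R : realFieldType) (n : nat) (e : rel 'I_n).
Hypotheses (e_simple : simple_graph e) (e_connected : connected_graph e).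
Variables (mu : R) (v : 'rV[R]_n).
Hypothesis v_eigen : v *m laplacian R e = mu *: v.

Let f i := v 0 i.

Lemma laplacian_eigvec_sum0 : mu != 0 -> \sum_j f j = 0.
Proof.
move=> mu_neq0; apply/eqP; rewrite -(mulIr_eq0 _ (mulIf mu_neq0)) mulrC mulr_sumr.
rewrite (eq_bigr (fun j => (v *m laplacian R e) 0 j)); last first.
  by move=> j _; rewrite v_eigen mxE.
under eq_bigr do rewrite mxE.
by rewrite exchange_big big1 // => i _; rewrite -mulr_sumr laplacian_row_sum ?mulr0.
Qed.

Lemma laplacian_eigvec_energy :
  mu * \sum_j f j ^+ 2 = dirichlet_energy e f / 2.
Proof.
rewrite -laplacian_quadraticE // mulr_sumr; apply: eq_bigr => j _.
have -> : \sum_i f i * laplacian R e i j = (v *m laplacian R e) 0 j by rewrite mxE.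
by rewrite v_eigen mxE /f; ring.
Qed.

Lemma laplacian_pos_eigenvalue_ge :
  v != 0 -> 0 < mu -> 1 <= 2 * n%:R ^+ 2 * mu.
Proof.
move=> v_neq0 mu_gt0.
have [i0 fi0] : exists i, f i != 0.
  apply/existsP; apply: contraR v_neq0 => /existsPn fv0.
  by apply/eqP/rowP => j; rewrite mxE; apply/eqP/negPn/fv0.
have norm_gt0 : 0 < \sum_j f j ^+ 2.
  rewrite (bigD1 i0) //= ltr_pwDl ?sumr_ge0 // => [|j _]; last exact: sqr_ge0.
  by rewrite lt_def sqr_ge0 sqrf_eq0 fi0.
have [a [b norm_le]] := sum_sqr_le_range i0 (laplacian_eigvec_sum0 (lt0r_neq0 mu_gt0)).
have diff_le := sqr_diff_le_energy f e_connected a b.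
have energyE := laplacian_eigvec_energy.
have n_ge0 : (0 : R) <= n%:R := ler0n _ _.
nra.
Qed.

End LaplacianEigenvalues.

Lemma second_smallest_eigenvalue_eigenvalue (R : realType) (n : nat)
    (A : 'M[R]_n) (lam : R) :
  (2 <= n)%N -> second_smallest_eigenvalue A lam -> eigenvalue A lam.
Proof.
move=> n_ge2 [ev [ev_size _ charA ->]].
by rewrite eigenvalue_root_char charA root_prod_XsubC mem_nth // ev_size.
Qed.

Lemma max_deg_le (n : nat) (e : rel 'I_n) : (max_deg e <= n)%N.
Proof.
apply/bigmax_leqP => i _.
by have := max_card [pred j | e i j]; rewrite card_ord.
Qed.

Lemma psi_c_bound (R : realFieldType) (N D sM lam : R) :
  0 <= D <= N -> 1 <= sM -> lam <= 0 \/ 1 <= 2 * N ^+ 2 * lam ->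
  4 * (8 * N * D * sM / lam) <= (8 * N ^+ 2 * sM) ^+ 2.
Proof.
move=> /andP[D_ge0 D_leN] sM_ge1.
have num_ge0 : 0 <= 8 * N * D * sM by rewrite !mulr_ge0 //; lra.
have rhs_ge0 := sqr_ge0 (8 * N ^+ 2 * sM).
case: (lerP lam 0) => [lam_le0 _ | lam_gt0 [lam_le0|lam_ge]]; [| lra |].
  by apply: le_trans rhs_ge0; rewrite pmulr_rle0 // mulr_ge0_le0 ?invr_le0.
rewrite mulrA ler_pdivrMr //.
have DsM_le : D * sM <= N * sM ^+ 2.
  apply: (@le_trans _ _ (N * sM)); first by rewrite ler_wpM2r //; lra.
  by rewrite expr2 mulrA ler_peMr // mulr_ge0 //; lra.
have : 0 <= N ^+ 3 * (N * sM ^+ 2 - D * sM) by rewrite mulr_ge0 ?exprn_ge0 //; lra.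
nra.
Qed.

Lemma approx_NE_gap (R : realFieldType) (delta A B a b : R) :
  1 < delta -> delta * B <= A -> `|a - A| <= B -> `|b - A| <= B ->
  (1 - 2 / (1 + delta)) * a - b <= 0.
Proof.
move=> delta_gt1 AB; rewrite !ler_norml => /andP[a_lo a_hi] /andP[b_lo b_hi].
have -> : (1 - 2 / (1 + delta)) * a - b =
    ((delta - 1) * a - (1 + delta) * b) / (1 + delta).
  by field; rewrite gt_eqF //; lra.
rewrite pmulr_lle0 ?invr_gt0; last lra.
nra.
Qed.

Section Loads.
Variables (R : realType) (n m : nat) (s : 'I_n -> R) (x : 'I_m -> 'I_n).
Hypothesis s_ge1 : forall i, 1 <= s i.

Let dev i := ((load_w x i)%:R - m%:R * s i / s_sum s) / s i.

Lemma load_lE i : load_l s x i = m%:R / s_sum s + dev i.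
Proof.
have s_gt0 : 0 < s i := lt_le_trans ltr01 (s_ge1 i).
by rewrite /load_l /dev mulrBl [_ / s_sum s / _]mulrAC mulfK ?lt0r_neq0 // addrC subrK.
Qed.

Lemma sqr_dev_le_Psi0 i : dev i ^+ 2 <= Psi0 s x.
Proof.
have s_gt0 : 0 < s i := lt_le_trans ltr01 (s_ge1 i).
apply: (@le_trans _ _ (((load_w x i)%:R - m%:R * s i / s_sum s) ^+ 2 / s i)).
  rewrite /dev expr_div_n expr2 invfM mulrA ler_piMr ?invf_le1 //.
  by rewrite divr_ge0 ?sqr_ge0 ?ltW.
rewrite /Psi0 (bigD1 i) //= lerDl; apply: sumr_ge0 => j _.
by rewrite divr_ge0 ?sqr_ge0 // ltW // (lt_le_trans _ (s_ge1 j)).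
Qed.

Lemma approx_NE_of_Psi0_le (e : rel 'I_n) (delta B : R) :
  1 < delta -> 0 <= B -> delta * B <= m%:R / s_sum s -> Psi0 s x <= B ^+ 2 ->
  approx_NE e s (2 / (1 + delta)) x.
Proof.
move=> delta_gt1 B_ge0 AB PsiB i j _.
have dev_le k : `|load_l s x k - m%:R / s_sum s| <= B.
  rewrite load_lE addrC addKr -(ler_sqr (normr_ge0 _) B_ge0) -normrX.
  by rewrite ger0_norm ?sqr_ge0 // (le_trans (sqr_dev_le_Psi0 k)).
apply: le_trans (approx_NE_gap delta_gt1 AB (dev_le i) (dev_le j)) _.
by rewrite divr_ge0 // ltW // (lt_le_trans _ (s_ge1 j)).
Qed.

End Loads.

Theorem lemma20 (R : realType) (n : nat) (e : rel 'I_n) (s : 'I_n -> R)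
    (m : nat) (delta lam2 : R) :
  (2 <= n)%N ->
  simple_graph e ->
  connected_graph e ->
  (forall i, 0 < s i) ->
  (forall i, 1 <= s i) -> (exists i, s i = 1) ->
  second_smallest_eigenvalue (laplacian R e) lam2 ->
  1 < delta ->
  8 * delta * (n%:R) ^+ 2 * s_sum s * s_max s <= m%:R ->
  forall x : 'I_m -> 'I_n,
    Psi0 s x <= 4 * (8 * n%:R * (max_deg e)%:R * s_max s / lam2) ->
    approx_NE e s (2 / (1 + delta)) x.
Proof.
move=> n_ge2 e_simple e_connected s_gt0 s_ge1 [i1 _] lam2_2nd delta_gt1 m_ge x Psi_le.
have sM_ge1 : 1 <= s_max s by apply: le_trans (s_ge1 i1) (le_bigmax _ _ _).
have S_gt0 : 0 < s_sum s.
  by rewrite /s_sum (bigD1 i1) //= ltr_pwDl ?sumr_ge0 // => j _; apply: ltW.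
have lam2_cases : lam2 <= 0 \/ 1 <= 2 * n%:R ^+ 2 * lam2.
  case: (lerP lam2 0) => [|lam2_gt0]; [by left | right].
  have /eigenvalueP[v v_eigen v_neq0] :=
    second_smallest_eigenvalue_eigenvalue n_ge2 lam2_2nd.
  exact: (laplacian_pos_eigenvalue_ge e_simple e_connected v_eigen v_neq0 lam2_gt0).
have deg_bound : (0 : R) <= (max_deg e)%:R <= (n%:R : R).
  by rewrite ler0n ler_nat max_deg_le.
apply: (approx_NE_of_Psi0_le (B := 8 * n%:R ^+ 2 * s_max s) s_ge1 delta_gt1).
- by rewrite !mulr_ge0 ?exprn_ge0 //; lra.
- by rewrite ler_pdivlMr //; lra.
- exact: le_trans Psi_le (psi_c_bound deg_bound sM_ge1 lam2_cases).
Qed.
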